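(* In the setting below, the vector $$\begin{aligned}U=&\tfrac16\big[(-\lambda_1+\lambda_6)(-1)^3+(\lambda_3-\lambda_5)(-1)^3+(\lambda_1-\lambda_3+\lambda_5-\lambda_6)(-1)^3\big]\otimes e^0\\&+\tfrac12(\lambda_3-\lambda_5)(-1)\otimes\big(e^{\alpha_1-\alpha_6}+e^{-\alpha_1+\alpha_6}\big)+\tfrac12(-\lambda_1+\lambda_6)(-1)\otimes\big(e^{\alpha_3-\alpha_5}+e^{-\alpha_3+\alpha_5}\big)\\&+\tfrac12(-\lambda_1+\lambda_3-\lambda_5+\lambda_6)(-1)\otimes\big(e^{\alpha_1+\alpha_3-\alpha_5-\alpha_6}+e^{-\alpha_1-\alpha_3+\alpha_5+\alpha_6}\big)\in V^{\Lambda_0}\end{aligned}$$ is nonzero and is a highest weight vector of type $Vir(\tfrac45,3)\otimes W^{\Omega_0}$, i.e. it satisfies (HW1)–(HW5) with $h=3$ and $\omega_j=0$.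
   Context: Setting. $Q$ is the $E_6$ root lattice with simple roots $\alpha_1,\dots,\alpha_6$ (Dynkin chain $\alpha_1-\alpha_3-\alpha_4-\alpha_5-\alpha_6$, $\alpha_2$ attached to $\alpha_4$), form from the Cartan matrix, fundamental weights $\lambda_i$, $P=\bigoplus\mathbb Z\lambda_i$, $\mathfrak h=\mathbb C\otimes P$. $\varepsilon$ bimultiplicative on $P$ with $[\varepsilon(\lambda_i,\lambda_j)]$ rows $(1,1,1,1,1,1)$, $(-1,1,1,1,1,-1)$, $(-1,1,1,1,1,1)$, $(1,-1,1,1,1,1)$, $(1,1,1,1,1,-1)$, $(1,1,1,1,1,1)$. $V_P=S(\hat{\mathfrak h}^-)\otimes\mathbb C[P]$ with Heisenberg operators $h(n)$ ($[h(m),h'(n)]=m\langle h,h'\rangle\delta_{m+n,0}$, $h(n)1=0$ for $n>0$, $h(0)(u\otimes e^\beta)=\langle h,\beta\rangle u\otimes e^\beta$). For $\alpha\in Q$: $Y(1\otimes e^\alpha,z)=\exp(\sum_{k\ge1}\frac{\alpha(-k)}kz^k)\exp(-\sum_{k\ge1}\frac{\alpha(k)}kz^{-k})e_\alpha z^{\alpha(0)}=\sum_n\{1\otimes e^\alpha\}_nz^{-n-1}$, $e_\alpha(u\otimes e^\beta)=\varepsilon(\alpha,\beta)u\otimes e^{\alpha+\beta}$, $z^{\alpha(0)}(u\otimes e^\beta)=z^{\langle\alpha,\beta\rangle}u\otimes e^\beta$; for general vectors $Y(h_1(-n_1-1)\cdots h_k(-n_k-1)\otimes e^\alpha,z)=\,:h_1^{(n_1)}(z)\cdots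 h_k^{(n_k)}(z)Y(1\otimes e^\alpha,z):$, $h^{(n)}(z)=\frac1{n!}(\frac d{dz})^n\sum_mh(m)z^{-m-1}$, annihilators to the right. $V^{\Lambda_0}=S(\hat{\mathfrak h}^-)\otimes\mathbb C[Q]$. $\tau$: $\alpha_1\leftrightarrow\alpha_6$, $\alpha_3\leftrightarrow\alpha_5$; $\mathrm{Proj}(\nu)=(\nu+\tau\nu)/2$. $\theta=\alpha_1+2\alpha_2+2\alpha_3+3\alpha_4+2\alpha_5+\alpha_6$. Raising operators of $\tilde{\mathfrak a}$ ($F_4^{(1)}$): $\{\beta_1\}_0=\{1\otimes e^{\alpha_2}\}_0$, $\{\beta_2\}_0=\{1\otimes e^{\alpha_4}\}_0$, $\{\beta_3\}_0=\{1\otimes e^{\alpha_3}\}_0+\{1\otimes e^{\alpha_5}\}_0$, $\{\beta_4\}_0=\{1\otimes e^{\alpha_1}\}_0+\{1\otimes e^{\alpha_6}\}_0$, $\{1\otimes e^{-\theta}\}_1$. Coset conformal vector $\omega=\frac1{10}[(-\lambda_1+\lambda_6)(-1)^2+(\lambda_3-\lambda_5)(-1)^2+(\lambda_1-\lambda_3+\lambda_5-\lambda_6)(-1)^2]\otimes e^0+\frac15(-1\otimes e^{\pm\gamma_1}-1\otimes e^{\pm\gamma_2}+1\otimes e^{\pm\gamma_3})$, $\gamma_1=\alpha_1-\alpha_6$, $\gamma_2=\alpha_3-\alpha_5$, $\gamma_3=\gamma_1+\gamma_2$, $1\otimes e^{\pm\gamma}:=1\otimes e^\gamma+1\otimes e^{-\gamma}$;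 $L(n)=\{\omega\}_{n+1}$ (Virasoro, $c=4/5$, commuting with $\tilde{\mathfrak a}$). $\Omega_0$ is the basic level one $F_4^{(1)}$ weight, $W^{\Omega_0}$ its irreducible module. A nonzero $v$ is a highest weight vector of type $Vir(\frac45,h)\otimes W^{\Omega_j}$ if (HW1) $\{1\otimes e^{-\theta}\}_1v=0$; (HW2) $\{\beta_i\}_0v=0$, $i=1,\dots,4$; (HW3) $L(1)v=L(2)v=0$; (HW4) $L(0)v=hv$; (HW5) $v\in\bigoplus_kS(\hat{\mathfrak h}^-)\otimes e^{\nu_k}$ with $\mathrm{Proj}(\nu_k)=\omega_j$ ($\omega_0=0$). In the paper $U$ is constructed as $\{R\}_{-8/3}\cdot\tau R-\frac52\{\omega\}_{-2}(1\otimes e^0)$, with $\{R\}_n$ the modes of an intertwining operator for $R=1\otimes e^{-\lambda_1+\lambda_6}+1\otimes e^{\lambda_3-\lambda_5}-1\otimes e^{\lambda_1-\lambda_3+\lambda_5-\lambda_6}$; the explicit expression above is that vector. *)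

(* Lattice vertex operator algebra V_P for the E6 weight
   lattice, realised concretely (formal linear combinations of basis vectors
   u (x) e^beta, u a monomial of S(h^-) in the basis lambda_i(-n)). *)
From HB Require Import structures.
From mathcomp Require Import all_boot all_order all_algebra.
Set Implicit Arguments. Unset Strict Implicit. Unset Printing Implicit Defensive.
Import Order.TTheory GRing.Theory Num.Theory.

(* elements of P are written in coordinates w.r.t. lambda_1..lambda_6 *)
Definition lat := seq int.
Definition idx6 : seq nat := iota 0 6.

(* Cartan matrix: row i = coordinates of alpha_{i+1} in the lambda-basis *)
Definition cartan : seq (seq int) :=
  [:: [:: 2; 0; -1; 0; 0; 0];
      [:: 0; 2; 0; -1; 0; 0];
      [:: -1; 0; 2; -1; 0; 0];
      [:: 0; -1; -1; 2; -1; 0];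
      [:: 0; 0; 0; -1; 2; -1];
      [:: 0; 0; 0; 0; -1; 2]]%R.

(* 3 * (inverse Cartan matrix) = 3 * Gram matrix <lambda_i, lambda_j> *)
Definition G3 : seq (seq int) :=
  [:: [:: 4; 3; 5; 6; 4; 2];
      [:: 3; 6; 6; 9; 6; 3];
      [:: 5; 6; 10; 12; 8; 4];
      [:: 6; 9; 12; 18; 12; 6];
      [:: 4; 6; 8; 12; 10; 5];
      [:: 2; 3; 4; 6; 5; 4]]%R.

(* computable finite sum (kept free of the locked bigop for evaluation) *)
Definition ssum {A : Type} {M : nmodType} (s : seq A) (f : A -> M) : M :=
  foldr (fun x acc => (f x + acc)%R) 0%R s.

Definition mat_entry (M : seq (seq int)) (i j : nat) : int := nth 0%R (nth [::] M i) j.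

Definition ladd (x y : lat) : lat := [seq (nth 0 x i + nth 0 y i)%R | i <- idx6].
Definition lopp (x : lat) : lat := [seq (- nth 0 x i)%R | i <- idx6].
Definition lzero : lat := nseq 6 0%R.
Definition lam (i : nat) : lat := [seq (if j == i then 1%R else 0%R) | j <- idx6].
Definition alpha (i : nat) : lat := nth [::] cartan i.

(* 3 <x,y> and <x,y> (the latter used for x in Q, where it is an integer) *)
Definition pair3 (x y : lat) : int :=
  ssum idx6 (fun i => ssum idx6 (fun j => (nth 0 x i * mat_entry G3 i j * nth 0 y j)%R)).
Definition ipair (x y : lat) : int := (pair3 x y %/ 3)%Z.

(* x lies in the root lattice Q  iff  its alpha-coordinates G x are integral *)
Definition inQ (x : lat) : bool :=
  (size x == 6) && all (fun i => (3 %| ssum idx6 (fun j => (mat_entry G3 i j * nth 0 x j)%R))%Z) idx6.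

(* the cocycle: eps(lambda_i,lambda_j) = -1 exactly for these (0-indexed)
   pairs, extended bimultiplicatively *)
Definition eps_neg : seq (nat * nat) := [:: (1,0); (1,5); (2,0); (3,1); (4,5)]%N.
Definition eps_odd (x y : lat) : bool :=
  odd (absz (ssum eps_neg (fun p => (nth 0 x p.1 * nth 0 y p.2)%R))).

Definition tau (x : lat) : lat :=
  [:: nth 0 x 5; nth 0 x 1; nth 0 x 4; nth 0 x 3; nth 0 x 2; nth 0 x 0]%R.

(* a factor (i, n), n >= 1, stands for lambda_{i+1}(-n); monomials are kept
   sorted (canonical form) *)
Definition mono := seq (nat * nat).
Definition le_fac (a b : nat * nat) : bool := (a.1 < b.1) || ((a.1 == b.1) && (a.2 <= b.2)).
Fixpoint insert_fac (x : nat * nat) (s : mono) : mono :=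
  match s with
  | [::] => [:: x]
  | y :: s' => if le_fac x y then x :: s else y :: insert_fac x s'
  end.
Definition drop_at (i : nat) (s : mono) : mono := take i s ++ drop i.+1 s.
Definition deg (m : mono) : nat := sumn (map snd m).

(* basis vector u (x) e^beta *)
Definition key := (mono * lat)%type.

Fixpoint masks (n : nat) : seq (seq bool) :=
  if n is n'.+1 then [seq b :: s | b <- [:: true; false], s <- masks n'] else [:: [::]].

Section VP.
Variable R : fieldType.
Local Open Scope ring_scope.

Definition vec := seq (R * key).
Definition coef (v : vec) (k : key) : R := ssum v (fun p => if p.2 == k then p.1 else 0).
Definition vzero (v : vec) : Prop := forall k, coef v k = 0.
Definition basis (k : key) : vec := [:: (1, k)].
Definition vscale (c : R) (v : vec) : vec := [seq (c * p.1, p.2) | p <- v].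
Definition vadd (v w : vec) : vec := v ++ w.
Definition vsub (v w : vec) : vec := v ++ vscale (-1) w.
Definition vsum (vs : seq vec) : vec := flatten vs.
Definition vnorm (v : vec) : vec :=
  [seq (coef v k, k) | k <- undup (map snd v) & coef v k != 0].
(* linear extension of a map defined on basis vectors (the input is first
   put in normal form, which does not change the vector it represents) *)
Definition lin (f : key -> vec) (v : vec) : vec :=
  flatten [seq vscale p.1 (f p.2) | p <- vnorm v].
Definition maxdeg (v : vec) : nat := foldr maxn 0%N [seq deg p.2.1 | p <- v].

(* elements of h = C (x) P, lambda-coordinates *)
Definition hvec := seq R.
Definition lat2h (x : lat) : hvec := [seq (nth 0 x i)%:~R | i <- idx6].
Definition hpair_lat (h : hvec) (b : lat) : R :=
  ssum idx6 (fun i => ssum idx6 (fun j =>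
     nth 0 h i * (mat_entry G3 i j)%:~R * (nth 0 b j)%:~R)) / 3%:R.
Definition hpair_fund (h : hvec) (j : nat) : R :=
  ssum idx6 (fun i => nth 0 h i * (mat_entry G3 i j)%:~R) / 3%:R.

Definition heis_key (h : hvec) (m : int) (k : key) : vec :=
  match m with
  | Posz 0 => [:: (hpair_lat h k.2, k)]
  | Posz n => [seq (n%:R * hpair_fund h (nth (0,0)%N k.1 i).1, (drop_at i k.1, k.2))
               | i <- iota 0 (size k.1) & (nth (0,0)%N k.1 i).2 == n]
  | Negz n => [seq (nth 0 h j, (insert_fac (j, n.+1) k.1, k.2)) | j <- idx6]
  end.
Definition heis (h : hvec) (m : int) (v : vec) : vec := lin (heis_key h m) v.

(* S_m for exp(sum_{k>=1} a_k z^k / k) with commuting operators a_k = op k *)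
Fixpoint schur_rev (op : nat -> vec -> vec) (m : nat) (v : vec) : seq vec :=
  match m with
  | 0 => [:: v]
  | m'.+1 => let l := schur_rev op m' v in
      vscale (m'.+1%:R)^-1 (vsum [seq op k (nth [::] l k.-1) | k <- iota 1 m'.+1]) :: l
  end.
Definition schur (op : nat -> vec -> vec) (m : nat) (v : vec) : vec :=
  head [::] (schur_rev op m v).

(* coefficient of z^m in exp(sum alpha(-k) z^k/k), resp. of z^{-m} in
   exp(-sum alpha(k) z^{-k}/k) *)
Definition Ecre (a : lat) (m : nat) (v : vec) : vec :=
  schur (fun k => heis (lat2h a) (Negz k.-1)) m v.
Definition Eann (a : lat) (m : nat) (v : vec) : vec :=
  schur (fun k w => vscale (-1) (heis (lat2h a) (Posz k) w)) m v.

(* finite Laurent expansions: list of (exponent of z, vector) *)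
Definition lpoly := seq (int * vec).
Definition lp_then (F : vec -> lpoly) (L : lpoly) : lpoly :=
  flatten [seq [seq (e.1 + f.1, f.2) | f <- F e.2] | e <- L].

(* annihilation part (modes m >= 0) of lambda_{i+1}^{(n)}(z):
   sum_{m>=0} binom(-m-1,n) lambda_{i+1}(m) z^{-m-1-n} *)
Definition ann_fac (i n : nat) (v : vec) : lpoly :=
  [seq (- (m%:Z) - 1 - n%:Z,
        vscale ((-1) ^+ n * ('C(m + n, n))%:R) (heis (lat2h (lam i)) (Posz m) v))
  | m <- iota 0 (maxdeg v).+1].
Definition ealpha (a : lat) (v : vec) : lpoly :=
  [seq (ipair a p.2.2,
        [:: ((-1) ^+ eps_odd a p.2.2 * p.1, (p.2.1, ladd a p.2.2))]) | p <- v].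
Definition Eplus (a : lat) (v : vec) : lpoly :=
  [seq (- (m%:Z), Eann a m v) | m <- iota 0 (maxdeg v).+1].

(* series with nonnegative powers: coefficient functions *)
Definition sprod (F G : nat -> vec -> vec) (d : nat) (v : vec) : vec :=
  vsum [seq F k (G (d - k)%N v) | k <- iota 0 d.+1].
(* creation part of lambda_{i+1}^{(n)}(z): sum_{q>=n} binom(q,n) lambda(-q-1) z^{q-n} *)
Definition cre_fac (i n : nat) (d : nat) (v : vec) : vec :=
  vscale ('C(d + n, n))%:R (heis (lat2h (lam i)) (Negz (d + n)) v).

(* the mode {u (x) e^alpha}_N of
   Y(u (x) e^alpha, z) = : h_1^{(n_1)}(z) ... h_k^{(n_k)}(z) Y(1 (x) e^alpha, z) :,
   Y(1 (x) e^alpha,z) = E^-(alpha,z) E^+(alpha,z) e_alpha z^{alpha(0)},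
   creation operators on the left, annihilation operators (modes >= 0) on
   the right; u = lambda_{i_1}(-n_1-1)...lambda_{i_k}(-n_k-1). *)
Definition mode_key (u : key) (N : int) (k : key) : vec :=
  let: (mu, a) := u in
  vsum [seq
    let L1 := foldr (fun f L => lp_then (ann_fac f.1 f.2.-1) L) [:: (0%:Z, basis k)]
                 (mask (map negb Sm) mu) in
    let L2 := lp_then (Eplus a) (lp_then (ealpha a) L1) in
    let CRE := foldr (fun f G => sprod (cre_fac f.1 f.2.-1) G) (Ecre a) (mask Sm mu) in
    vsum [seq match (- N - 1 - e.1)%R with
              | Posz d => CRE d e.2
              | Negz _ => [::] end | e <- L2]
  | Sm <- masks (size mu)].

Definition ymode (v : vec) (N : int) (x : vec) : vec :=
  flatten [seq vscale p.1 (lin (mode_key p.2 N) x) | p <- vnorm v].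

Definition lsum (xs : seq lat) : lat := foldr ladd lzero xs.
Definition lscal (c : int) (x : lat) : lat := [seq (c * nth 0 x i)%R | i <- idx6].
Definition theta : lat :=
  lsum [:: alpha 0; lscal 2 (alpha 1); lscal 2 (alpha 2); lscal 3 (alpha 3);
           lscal 2 (alpha 4); alpha 5].
Definition gamma1 : lat := ladd (alpha 0) (lopp (alpha 5)).
Definition gamma2 : lat := ladd (alpha 2) (lopp (alpha 4)).
Definition gamma3 : lat := ladd gamma1 gamma2.

Definition hA : lat := ladd (lopp (lam 0)) (lam 5).
Definition hB : lat := ladd (lam 2) (lopp (lam 4)).
Definition hC : lat := lsum [:: lam 0; lopp (lam 2); lam 4; lopp (lam 5)].
Definition hD : lat := lsum [:: lopp (lam 0); lam 2; lopp (lam 4); lam 5].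

Definition vac : vec := basis ([::], lzero).
Definition ee (b : lat) : vec := basis ([::], b).
Definition epm (b : lat) : vec := vadd (ee b) (ee (lopp b)).
Definition hm1 (h : lat) (v : vec) : vec := heis (lat2h h) (Negz 0) v.

(* coset conformal vector omega *)
Definition omega : vec :=
  vsum [:: vscale (10%:R)^-1
             (vsum [:: hm1 hA (hm1 hA vac); hm1 hB (hm1 hB vac); hm1 hC (hm1 hC vac)]);
           vscale (5%:R)^-1
             (vsum [:: vscale (-1) (epm gamma1); vscale (-1) (epm gamma2); epm gamma3])].
Definition Lvir (n : int) (v : vec) : vec := ymode omega (n + 1) v.

(* raising operators of F4^(1) *)
Definition raise_theta (v : vec) : vec := ymode (ee (lopp theta)) 1 v.
Definition raise (i : nat) (v : vec) : vec :=
  match i with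
  | 1 => ymode (ee (alpha 1)) 0 v
  | 2 => ymode (ee (alpha 3)) 0 v
  | 3 => ymode (vadd (ee (alpha 2)) (ee (alpha 4))) 0 v
  | _ => ymode (vadd (ee (alpha 0)) (ee (alpha 5))) 0 v
  end%N.

(* membership in V^{Lambda_0} = S(h^-) (x) C[Q] *)
Definition in_VQ (v : vec) : Prop := forall k, coef v k != 0 -> inQ k.2.

(* highest weight vector of type Vir(4/5,h) (x) W^{Omega_j}; [twice_wj] is
   2 omega_j, so (HW5) reads nu + tau nu = 2 omega_j *)
Definition is_hw_vector (v : vec) (h : R) (twice_wj : lat) : Prop :=
  [/\ ~ vzero v,
      vzero (raise_theta v) /\
      (forall i : nat, (1 <= i <= 4)%N -> vzero (raise i v)),
      vzero (Lvir 1 v) /\ vzero (Lvir 2 v),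
      vzero (vsub (Lvir 0 v) (vscale h v))
    & forall k, coef v k != 0 -> ladd k.2 (tau k.2) = twice_wj].

Definition U : vec :=
  vsum [:: vscale (6%:R)^-1
             (vsum [:: hm1 hA (hm1 hA (hm1 hA vac)); hm1 hB (hm1 hB (hm1 hB vac));
                       hm1 hC (hm1 hC (hm1 hC vac))]);
           vscale (2%:R)^-1 (hm1 hB (epm gamma1));
           vscale (2%:R)^-1 (hm1 hA (epm gamma2));
           vscale (2%:R)^-1 (hm1 hD (epm gamma3))].

End VP.

From mathcomp Require Import all_boot all_order all_algebra algC.
Set Implicit Arguments. Unset Strict Implicit. Unset Printing Implicit Defensive.
Import Order.TTheory GRing.Theory Num.Theory.
Local Open Scope ring_scope.

(* Every operator in the statement (Heisenberg modes, the Schur expansions of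
   E^{+-}, the modes {v}_N, L(n), the F4 raising operators) is given by finite
   formulas whose coefficients are integers, binomials and inverses of
   naturals, so it commutes with any field morphism applied coefficientwise.
   Over Q the vectors are computable and (HW1)-(HW5) reduce to finitely many
   coefficient checks, decided by evaluation; the injective morphism
   ratr : Q -> algC then carries them to the algebraic complex numbers. *)

Lemma nth_map_default (A B : Type) (g : A -> B) (x0 : A) (y0 : B) (s : seq A) i :
  g x0 = y0 -> nth y0 (map g s) i = g (nth x0 s i).
Proof. by move=> gx0; elim: s i => [|x s IHs] [|i] //=. Qed.

Lemma eq_ssum (A : Type) (M : nmodType) (s : seq A) (g h : A -> M) :
  g =1 h -> ssum s g = ssum s h.
Proof. by move=> eq_gh; elim: s => [|x s IHs] //; rewrite /ssum /= eq_gh; congr (_ + _). Qed.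

Lemma vsum_cons (R : fieldType) (v : vec R) vs : vsum (v :: vs) = v ++ vsum vs.
Proof. by []. Qed.

Lemma schur_rev_S (R : fieldType) (op : nat -> vec R -> vec R) m v :
  schur_rev op m.+1 v =
  vscale (m.+1%:R)^-1 (vsum [seq op k (nth [::] (schur_rev op m v) k.-1) | k <- iota 1 m.+1])
    :: schur_rev op m v.
Proof. by []. Qed.

Section MapCoefficients.
Variables (F K : fieldType) (f : {rmorphism F -> K}).

Definition mapv (v : vec F) : vec K := [seq (f p.1, p.2) | p <- v].
Definition mapl (L : lpoly F) : lpoly K := [seq (e.1, mapv e.2) | e <- L].

Lemma coef_mapv v k : coef (mapv v) k = f (coef v k).
Proof.
elim: v => [|p v IHv]; first by rewrite /coef /= rmorph0.
rewrite /coef /= -/(coef v k) -/(coef (mapv v) k) IHv rmorphD.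
by case: ifP; rewrite ?rmorph0.
Qed.

Lemma vzero_mapv v : vzero (mapv v) <-> vzero v.
Proof.
split=> v0 k; move: (v0 k); rewrite coef_mapv; last by move=> ->; rewrite rmorph0.
by move/eqP; rewrite fmorph_eq0 => /eqP.
Qed.

Lemma vnorm_mapv v : vnorm (mapv v) = mapv (vnorm v).
Proof.
rewrite /vnorm /mapv -map_comp -[in RHS]map_comp.
rewrite (eq_filter (a2 := fun k => coef v k != 0)); last first.
  by move=> k; rewrite -/(mapv v) coef_mapv fmorph_eq0.
by apply: eq_map => k /=; rewrite -/(mapv v) coef_mapv.
Qed.

Lemma vscale_mapv c v : vscale (f c) (mapv v) = mapv (vscale c v).
Proof. by rewrite /vscale /mapv -!map_comp; apply: eq_map => p /=; rewrite rmorphM. Qed.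

Lemma vadd_mapv v w : vadd (mapv v) (mapv w) = mapv (vadd v w).
Proof. by rewrite /vadd /mapv map_cat. Qed.

Lemma vsub_mapv v w : vsub (mapv v) (mapv w) = mapv (vsub v w).
Proof. by rewrite /vsub -(rmorphN1 f) vscale_mapv /mapv map_cat. Qed.

Lemma mapv_cat v w : mapv (v ++ w) = mapv v ++ mapv w.
Proof. exact: map_cat. Qed.

Lemma vsum_mapv vs : vsum (map mapv vs) = mapv (vsum vs).
Proof. by rewrite /vsum /mapv map_flatten. Qed.

Lemma maxdeg_mapv v : maxdeg (mapv v) = maxdeg v.
Proof. by rewrite /maxdeg /mapv -map_comp. Qed.

Lemma basis_mapv k : basis K k = mapv (basis F k).
Proof. by rewrite /basis /mapv /= rmorph1. Qed.

Lemma lin_mapv (G' : key -> vec K) (G : key -> vec F) v :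
  (forall k, G' k = mapv (G k)) -> lin G' (mapv v) = mapv (lin G v).
Proof.
move=> eqG; rewrite /lin vnorm_mapv /mapv map_flatten -!map_comp.
by congr flatten; apply: eq_map => p /=; rewrite eqG -/(mapv _) vscale_mapv.
Qed.

Lemma lp_then_mapl (G' : vec K -> lpoly K) (G : vec F -> lpoly F) L :
  (forall w, G' (mapv w) = mapl (G w)) -> lp_then G' (mapl L) = mapl (lp_then G L).
Proof.
move=> eqG; rewrite /lp_then /mapl map_flatten -!map_comp; congr flatten.
by apply: eq_map => e /=; rewrite eqG /mapl -!map_comp.
Qed.

Lemma nth_map_rmorph (h : hvec F) i : nth 0 (map f h) i = f (nth 0 h i).
Proof. by apply: nth_map_default; rewrite rmorph0. Qed.

Lemma rmorph_ssum (A : Type) (s : seq A) (g : A -> F) :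
  f (ssum s g) = ssum s (fun x => f (g x)).
Proof. by elim: s => [|x s IHs]; rewrite /ssum /= ?rmorph0 // rmorphD; congr (_ + _). Qed.

Lemma lat2h_rmorph a : lat2h K a = map f (lat2h F a).
Proof. by rewrite /lat2h -map_comp; apply: eq_map => i /=; rewrite rmorph_int. Qed.

Lemma hpair_lat_rmorph h b : hpair_lat (map f h) b = f (hpair_lat h b).
Proof.
rewrite /hpair_lat fmorph_div rmorph_nat rmorph_ssum; congr (_ / _).
apply: eq_ssum => i; rewrite rmorph_ssum; apply: eq_ssum => j.
by rewrite !rmorphM !rmorph_int nth_map_rmorph.
Qed.

Lemma hpair_fund_rmorph h j : hpair_fund (map f h) j = f (hpair_fund h j).
Proof.
rewrite /hpair_fund fmorph_div rmorph_nat rmorph_ssum; congr (_ / _).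
by apply: eq_ssum => i; rewrite !rmorphM !rmorph_int nth_map_rmorph.
Qed.

Lemma heis_mapv h m v : heis (map f h) m (mapv v) = mapv (heis h m v).
Proof.
apply: lin_mapv => k; rewrite /heis_key /mapv; case: m => [[|n]|n] /=.
- by rewrite hpair_lat_rmorph.
- rewrite -map_comp; apply: eq_map => i /=.
  by rewrite rmorphM rmorph_nat hpair_fund_rmorph.
- by rewrite !nth_map_rmorph.
Qed.

Lemma hm1_mapv h v : hm1 h (mapv v) = mapv (hm1 h v).
Proof. by rewrite /hm1 lat2h_rmorph heis_mapv. Qed.

Lemma schur_mapv (op' : nat -> vec K -> vec K) (op : nat -> vec F -> vec F) m v :
  (forall k w, op' k (mapv w) = mapv (op k w)) ->
  schur op' m (mapv v) = mapv (schur op m v).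
Proof.
move=> eq_op; rewrite /schur.
suff -> : schur_rev op' m (mapv v) = map mapv (schur_rev op m v).
  by case: (schur_rev op m v).
elim: m => [|m IHm] //; rewrite !schur_rev_S IHm; congr (_ :: _).
rewrite -vscale_mapv fmorphV rmorph_nat -vsum_mapv -map_comp.
by congr (vscale _ (vsum _)); apply: eq_map => k /=; rewrite (nth_map_default (x0 := [::])).
Qed.

Lemma Ecre_mapv a m v : Ecre a m (mapv v) = mapv (Ecre a m v).
Proof. by apply: schur_mapv => k w; rewrite lat2h_rmorph heis_mapv. Qed.

Lemma Eann_mapv a m v : Eann a m (mapv v) = mapv (Eann a m v).
Proof.
by apply: schur_mapv => k w; rewrite lat2h_rmorph heis_mapv -(rmorphN1 f) vscale_mapv.
Qed.

Lemma ann_fac_mapv i n v : ann_fac i n (mapv v) = mapl (ann_fac i n v).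
Proof.
rewrite /ann_fac /mapl maxdeg_mapv -map_comp; apply: eq_map => m /=.
by rewrite lat2h_rmorph heis_mapv -vscale_mapv rmorphM rmorphXn rmorphN1 rmorph_nat.
Qed.

Lemma cre_fac_mapv i n d v : cre_fac i n d (mapv v) = mapv (cre_fac i n d v).
Proof. by rewrite /cre_fac lat2h_rmorph heis_mapv -vscale_mapv rmorph_nat. Qed.

Lemma ealpha_mapv a v : ealpha a (mapv v) = mapl (ealpha a v).
Proof.
rewrite /ealpha /mapl /mapv -!map_comp; apply: eq_map => p /=.
by rewrite rmorphM rmorphXn rmorphN1.
Qed.

Lemma Eplus_mapv a v : Eplus a (mapv v) = mapl (Eplus a v).
Proof.
by rewrite /Eplus /mapl maxdeg_mapv -map_comp; apply: eq_map => m /=; rewrite Eann_mapv.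
Qed.

Lemma sprod_mapv (G1' G2' : nat -> vec K -> vec K) (G1 G2 : nat -> vec F -> vec F) d v :
  (forall d w, G1' d (mapv w) = mapv (G1 d w)) ->
  (forall d w, G2' d (mapv w) = mapv (G2 d w)) ->
  sprod G1' G2' d (mapv v) = mapv (sprod G1 G2 d v).
Proof.
move=> eqG1 eqG2; rewrite /sprod -vsum_mapv -map_comp; congr vsum.
by apply: eq_map => k /=; rewrite eqG2 eqG1.
Qed.

Lemma foldr_ann_fac_mapv (s : mono) k :
  foldr (fun x L => lp_then (ann_fac x.1 x.2.-1) L) [:: (0%:Z, basis K k)] s
  = mapl (foldr (fun x L => lp_then (ann_fac x.1 x.2.-1) L) [:: (0%:Z, basis F k)] s).
Proof.
elim: s => [|x s IHs] /=; first by rewrite basis_mapv.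
by rewrite IHs; apply: lp_then_mapl => w; apply: ann_fac_mapv.
Qed.

Lemma foldr_cre_fac_mapv a (s : mono) d w :
  foldr (fun x G => sprod (cre_fac x.1 x.2.-1) G) (Ecre a) s d (mapv w)
  = mapv (foldr (fun x G => sprod (cre_fac x.1 x.2.-1) G) (Ecre a) s d w).
Proof.
elim: s d w => [|x s IHs] d w /=; first exact: Ecre_mapv.
by apply: sprod_mapv => // d' w'; apply: cre_fac_mapv.
Qed.

Lemma mode_key_mapv u N k : mode_key K u N k = mapv (mode_key F u N k).
Proof.
case: u => mu a; rewrite /mode_key -vsum_mapv -map_comp; congr vsum.
apply: eq_map => Sm /=; rewrite foldr_ann_fac_mapv.
rewrite (lp_then_mapl (G := ealpha a)); last exact: ealpha_mapv.
rewrite (lp_then_mapl (G := Eplus a)); last exact: Eplus_mapv.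
rewrite -vsum_mapv /mapl -!map_comp; congr vsum; apply: eq_map => e /=.
by case: (- N - 1 - e.1) => d //=; rewrite foldr_cre_fac_mapv.
Qed.

Lemma ymode_mapv v N x : ymode (mapv v) N (mapv x) = mapv (ymode v N x).
Proof.
rewrite /ymode vnorm_mapv /mapv map_flatten -!map_comp; congr flatten.
apply: eq_map => p /=; rewrite -/(mapv x) (lin_mapv (G := mode_key F p N)).
  by rewrite vscale_mapv.
by move=> k; apply: mode_key_mapv.
Qed.

Lemma ee_mapv b : ee K b = mapv (ee F b).
Proof. exact: basis_mapv. Qed.

Lemma epm_mapv b : epm K b = mapv (epm F b).
Proof. by rewrite /epm !ee_mapv vadd_mapv. Qed.

Lemma U_mapv : U K = mapv (U F).
Proof.
rewrite /U !vsum_cons !mapv_cat -!vscale_mapv !mapv_cat -!hm1_mapv -!epm_mapv.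
rewrite /vac -basis_mapv !fmorphV !rmorph_nat.
reflexivity.
Qed.

Lemma omega_mapv : omega K = mapv (omega F).
Proof.
rewrite /omega !vsum_cons !mapv_cat -!vscale_mapv !mapv_cat -!vscale_mapv.
rewrite -!hm1_mapv -!epm_mapv -!ee_mapv !fmorphV !rmorph_nat !rmorphN1.
reflexivity.
Qed.

Lemma Lvir_mapv n v : Lvir n (mapv v) = mapv (Lvir n v).
Proof. by rewrite /Lvir omega_mapv ymode_mapv. Qed.

Lemma raise_theta_mapv v : raise_theta (mapv v) = mapv (raise_theta v).
Proof. by rewrite /raise_theta ee_mapv ymode_mapv. Qed.

Lemma raise_mapv i v : raise i (mapv v) = mapv (raise i v).
Proof. by case: i => [|[|[|[|i]]]]; rewrite /raise ?ee_mapv ?vadd_mapv ymode_mapv. Qed.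

Lemma in_VQ_mapv v : in_VQ v -> in_VQ (mapv v).
Proof. by move=> vQ k; rewrite coef_mapv fmorph_eq0; apply: vQ. Qed.

Lemma is_hw_vector_mapv v h w : is_hw_vector v h w -> is_hw_vector (mapv v) (f h) w.
Proof.
case=> v_nz [theta0 raise0] [L1 L2] L0 vP; split.
- by move/vzero_mapv.
- split; first by rewrite raise_theta_mapv; apply/vzero_mapv.
  by move=> i i14; rewrite raise_mapv; apply/vzero_mapv/raise0.
- by rewrite !Lvir_mapv; split; apply/vzero_mapv.
- by rewrite Lvir_mapv vscale_mapv vsub_mapv; apply/vzero_mapv.
- by move=> k; rewrite coef_mapv fmorph_eq0; apply: vP.
Qed.

End MapCoefficients.

(* [undup] tests each item against the rest of the input, which is slow to
   evaluate on the long, highly repetitive lists of keys produced here;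
   accumulating the distinct keys instead keeps the computations below fast. *)
Definition dedup (T : eqType) (s : seq T) : seq T :=
  foldl (fun ks x => if x \in ks then ks else x :: ks) [::] s.

Lemma mem_dedup (T : eqType) (s : seq T) x : (x \in dedup s) = (x \in s).
Proof.
suff mem_acc ks : x \in foldl (fun ks y => if y \in ks then ks else y :: ks) ks s
                  = (x \in ks) || (x \in s) by rewrite mem_acc.
elim: s ks => [|y s IHs] ks /=; first by rewrite orbF.
rewrite IHs in_cons orbCA orbA; congr (_ || _).
by case: ifP => yks; rewrite ?in_cons //; case: eqP => [->|]; rewrite ?yks.
Qed.

Section DecideCoefficients.
Variable R : fieldType.
Implicit Types (v : vec R) (k : key).

Definition vzerob v : bool := all (fun k => coef v k == 0) (dedup (map snd v)).

Lemma coef_notin v k : k \notin map snd v -> coef v k = 0.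
Proof.
elim: v => [|p v IHv] //=; rewrite in_cons negb_or => /andP [kp kv].
rewrite /coef /= -/(coef v k) IHv // addr0.
by case: eqP => // pk; rewrite pk eqxx in kp.
Qed.

Lemma vzeroP v : reflect (vzero v) (vzerob v).
Proof.
apply: (iffP allP) => [v0 k | v0 k _]; last exact/eqP.
have [kv | /coef_notin //] := boolP (k \in map snd v).
by apply/eqP/v0; rewrite mem_dedup.
Qed.

Lemma coef_neq0_all (P : pred key) v k : all (P \o snd) v -> coef v k != 0 -> P k.
Proof.
move=> /allP vP; have [/mapP [p pv ->] | /coef_notin ->] := boolP (k \in map snd v).
  by move=> _; apply: vP.
by rewrite eqxx.
Qed.

End DecideCoefficients.

(* lambda_1(-1)^2 lambda_3(-1) (x) e^0 *)
Definition U_witness_key : key := ([:: (0,1); (0,1); (2,1)]%N, lzero).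

Lemma U_rat_in_VQ : in_VQ (U rat).
Proof. by move=> k; apply: (coef_neq0_all (P := fun k => inQ k.2)); vm_compute. Qed.

Lemma U_rat_hw : is_hw_vector (U rat) 3%:R lzero.
Proof.
split.
- by move=> /(_ U_witness_key)/eqP; vm_compute.
- split; first by apply/vzeroP; vm_compute.
  move=> i /andP []; case: i => [|[|[|[|[|i]]]]] // _ _; apply/vzeroP; by vm_compute.
- by split; apply/vzeroP; vm_compute.
- by apply/vzeroP; vm_compute.
- move=> k k_nz; apply/eqP.
  apply: (coef_neq0_all (P := fun k => ladd k.2 (tau k.2) == lzero) _ k_nz).
  by vm_compute.
Qed.

Theorem lemma6p4 :
  in_VQ (U algC) /\ is_hw_vector (U algC) 3%:R lzero.
Proof.
pose g : {rmorphism rat -> algC} := ratr.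
rewrite (U_mapv g) -(rmorph_nat g 3).
by split; [exact: in_VQ_mapv U_rat_in_VQ | exact: is_hw_vector_mapv U_rat_hw].
Qed.
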